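(* Let $A=k_{p_{ij}}[x_1,\dots,x_n]$ and let $\tau$ be a mystic reflection of $A$. Then there exist distinct $i,j\in[n]$ and $\lambda\in k^\times$ such that $p_{ij}=-1$, $p_{is}=p_{js}$ for all $s\notin\{i,j\}$, $B(i)=\{i\}$, $B(j)=\{j\}$, and $\tau=\tau_{i,j,\lambda}$. In particular, up to conjugation by elementary transformations, $\tau$ is a standard mystic reflection $\tau_{i,j,1}$.
   Context: $k$ is an algebraically closed field of characteristic zero, $n\ge2$, $[n]=\{1,\dots,n\}$. $A=k_{p_{ij}}[x_1,\dots,x_n]$ is the $k$-algebra generated by $x_1,\dots,x_n$ with relations $x_jx_i=p_{ij}x_ix_j$ ($i<j$), nonzero $p_{ij}\in k$, $\deg x_i=1$; $p_{ii}=1$, $p_{ij}=p_{ji}^{-1}$ for $i>j$. $\mathrm{Aut}(A)$: graded algebra automorphisms. $g\in\mathrm{Aut}(A)$ is a quasi-reflection if $\sum_i\mathrm{tr}(g|_{A_i})t^i=\frac{1}{(1-t)^{n-1}(1-\lambda t)}$ for some $\lambda\ne1$. A mystic reflection of $A$ is a quasi-reflection $g$ of order $4$ for which there is a basis $y_1,\dots,y_n$ of $A_1$ with $g(y_j)=y_j$ for $j\le n-2$, $g(y_{n-1})=\sqrt{-1}\,y_{n-1}$, $g(y_n)=-\sqrt{-1}\,y_n$. The block of $i$ is $B(i)=\{i': p_{ij}=p_{i'j}\ \forall j\}$. An elementary transformation is a graded automorphism sending $x_i\mapsto x'_i$ where for each block $B_w$, $\{x'_i:i\in B_w\}$ is a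 basis of $\bigoplus_{i\in B_w}kx_i$. For $s,t\in[n]$ with $p_{st}=-1$ and $p_{sj}=p_{tj}$ for all $j\notin\{s,t\}$, and $\lambda\in k^\times$, the standard mystic reflection $\tau_{s,t,\lambda}$ is the automorphism with $\tau_{s,t,\lambda}(x_s)=\lambda x_t$, $\tau_{s,t,\lambda}(x_t)=-\lambda^{-1}x_s$, $\tau_{s,t,\lambda}(x_i)=x_i$ for $i\ne s,t$. *)

From HB Require Import structures.
From mathcomp Require Import all_boot all_order all_algebra.
Set Implicit Arguments. Unset Strict Implicit. Unset Printing Implicit Defensive.
Import Order.TTheory GRing.Theory Num.Theory.
Local Open Scope ring_scope.

(* Skew polynomial ring A = k_{p_ij}[x_1..x_n], generators indexed by 'I_n.
   p : 'I_n -> 'I_n -> k is the full matrix of parameters (p i i = 1,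
   p j i = (p i j)^-1, all nonzero); relation: x_j x_i = p i j x_i x_j.

   A_d has the PBW basis x^s = x_{s_1} ... x_{s_d}, s a nondecreasing
   d-tuple of indices.  A word x_{v_1} ... x_{v_d} equals
   skew_coef p v * x^{sort v}, where skew_coef p v is the product, over
   inversions k < l with v_l < v_k, of p v_l v_k. *)

Section Skew.
Variables (k : fieldType) (n : nat) (p : 'I_n -> 'I_n -> k).

Definition le_idx (a b : 'I_n) : bool := (a <= b)%N.

Definition pbw (d : nat) (s : d.-tuple 'I_n) : bool := sorted le_idx s.

Definition skew_coef (d : nat) (v : d.-tuple 'I_n) : k :=
  \prod_(a < d) \prod_(b < d | (a < b)%N && (tnth v b < tnth v a)%N)
     p (tnth v b) (tnth v a).

(* Coefficient of the basis monomial x^s (s pbw) in the product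
   y_0 y_1 ... y_{d-1}, where y_a = \sum_u Y a u x_u lies in A_1. *)
Definition prod_coef (d : nat) (Y : 'I_d -> 'I_n -> k) (s : d.-tuple 'I_n) : k :=
  \sum_(v : d.-tuple 'I_n | perm_eq v s)
     (\prod_(a < d) Y a (tnth v a)) * skew_coef v.

(* A linear map g on A_1 is encoded by a matrix M with
   g(x_i) = \sum_j M i j x_j  (row i = image of x_i). *)

(* M extends to a graded algebra automorphism of A: M invertible and the
   defining relations are preserved: g(x_j) g(x_i) = p i j g(x_i) g(x_j)
   in A_2 (A is quadratic, generated in degree 1). *)
Definition graded_aut (M : 'M[k]_n) : Prop :=
  M \in unitmx /\
  forall (i j : 'I_n) (s : 2.-tuple 'I_n), pbw s ->
    prod_coef (fun a u => M (if val a == 0%N then j else i) u) s =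
    p i j * prod_coef (fun a u => M (if val a == 0%N then i else j) u) s.

(* trace of g on A_d: diagonal coefficients in the PBW basis, where
   g(x^s) = g(x_{s_0}) ... g(x_{s_{d-1}}). *)
Definition trace_deg (M : 'M[k]_n) (d : nat) : k :=
  \sum_(s : d.-tuple 'I_n | pbw s) prod_coef (fun a u => M (tnth s a) u) s.

(* Coefficient of t^d in 1 / ((1-t)^(n-1) (1 - lam t)). *)
Definition qr_series_coef (lam : k) (d : nat) : k :=
  \sum_(m < d.+1) lam ^+ m * ('C(d - m + (n - 2), n - 2))%:R.

Definition quasi_reflection (M : 'M[k]_n) : Prop :=
  graded_aut M /\
  exists lam : k, lam != 1 /\ forall d : nat, trace_deg M d = qr_series_coef lam d.

(* mystic reflection: quasi-reflection of order 4 diagonalisable as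
   diag(1,..,1, sqrt(-1), -sqrt(-1)) in some basis y_j = \sum_i P j i x_i. *)
Definition mystic_reflection (M : 'M[k]_n) : Prop :=
  quasi_reflection M /\
  M ^+ 4 = 1%:M /\ (forall m : nat, (0 < m < 4)%N -> M ^+ m != 1%:M) /\
  exists (im : k) (P : 'M[k]_n), im ^+ 2 = -1 /\ P \in unitmx /\
    P *m M = diag_mx (\row_(j < n)
       (if (j.+2 == n)%N then im else if (j.+1 == n)%N then - im else 1)) *m P.

Definition block (i : 'I_n) : {set 'I_n} :=
  [set i' | [forall j, p i j == p i' j]].

(* elementary transformation: a graded automorphism sending each x_i into the
   span of {x_i' : i' in B(i)} (invertibility gives the basis condition). *)
Definition elementary (E : 'M[k]_n) : Prop :=
  graded_aut E /\ forall i j : 'I_n, j \notin block i -> E i j = 0.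

Definition std_mystic (s t : 'I_n) (lam : k) : 'M[k]_n :=
  \matrix_(i, j)
    (if i == s then (if j == t then lam else 0)
     else if i == t then (if j == s then - lam^-1 else 0)
     else (if i == j then 1 else 0)).

End Skew.

From HB Require Import structures.
From mathcomp Require Import all_boot all_order all_algebra.
From mathcomp Require Import ring zify.
Import Order.TTheory GRing.Theory Num.Theory.
Local Open Scope ring_scope.
Set Implicit Arguments. Unset Strict Implicit. Unset Printing Implicit Defensive.

(* Write tau = 1 + R, where R has rank two and nonzero eigenvalues
   +-sqrt(-1) - 1, so tr R = -2 and tr R^2 = 0.  The degree-1 coefficient of
   the trace series forces lambda = -1, and then the degree-2 coefficient says
   that sum_(a < b) (p_ab - 1) tau_ab tau_ba = 2.  Preservation of the
   relations gives p_ab = -1 as soon as p_ab <> 1 and tau_ab tau_ba <> 0, so in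
   characteristic zero some pair i, j has p_ij = -1 and
   tau_ij tau_ji not in {0, 1}.  Then tau_ii = tau_jj = 0, the vanishing of the
   3 x 3 minors of R and tr R = -2 confine R to the block {i, j}, and
   tau^4 = 1 gives tau_ij tau_ji = -1.  The relation x_s x_i = p_is x_i x_s
   yields p_is = p_js, and conjugating by the diagonal matrix scaling x_i by
   lambda normalises lambda to 1. *)

Lemma perm_eq2 (T : eqType) (x y a b : T) :
  perm_eq [:: x; y] [:: a; b] = ((x == a) && (y == b)) || ((x == b) && (y == a)).
Proof.
apply/idP/idP; last first.
  by case/orP=> /andP[/eqP-> /eqP->] //; rewrite (perm_catC [:: b] [:: a]).
move=> /perm_mem H.
have := H x; have := H y; have := H a; have := H b; rewrite !inE !eqxx ?orbT /=.
move=> /orP[/eqP bx|/eqP byy] /orP[/eqP ax|/eqP ay] /esym/orP[/eqP ya|/eqP yb]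
  /esym/orP[/eqP xa|/eqP xb]; subst; rewrite ?eqxx ?orbT //.
Qed.

Lemma tuple1E (T : Type) (t : 1.-tuple T) : t = [tuple tnth t ord0].
Proof. by case: t => [[|a [|b s]] //= h]; apply: val_inj. Qed.

Lemma tuple2E (T : Type) (t : 2.-tuple T) : t = [tuple tnth t ord0; tnth t ord_max].
Proof. by case: t => [[|a [|b [|c s]]] //= h]; apply: val_inj. Qed.

Lemma big_ord2 (R : Type) (idx : R) (op : Monoid.law idx) (F : 'I_2 -> R) :
  \big[op/idx]_(a < 2) F a = op (F ord0) (F ord_max).
Proof. by rewrite big_ord_recl big_ord1; congr (op _ (F _)); apply: val_inj. Qed.

Section SumLemmas.
Variables (k : fieldType) (n : nat).

Lemma sum_delta (a : 'I_n) (F : 'I_n -> k) : \sum_b (a == b)%:R * F b = F a.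
Proof.
rewrite (bigD1 a) //= big1 ?eqxx ?mul1r ?addr0 // => b hb.
by rewrite eq_sym (negbTE hb) mul0r.
Qed.

Lemma sum_single (c : 'I_n) (F : 'I_n -> k) :
  (forall l, l != c -> F l = 0) -> \sum_l F l = F c.
Proof. by move=> h; rewrite (bigD1 c) //= big1 ?addr0 // => l /h. Qed.

Lemma sum_sym_split (f : 'I_n -> 'I_n -> k) : (forall a b, f a b = f b a) ->
  \sum_a \sum_b f a b =
  \sum_a f a a + 2 * \sum_(a : 'I_n) \sum_(b : 'I_n | (a < b)%N) f a b.
Proof.
move=> fs.
have split_row a : \sum_b f a b = f a a + \sum_(b : 'I_n | (a < b)%N) f a b
                                        + \sum_(b : 'I_n | (b < a)%N) f a b.
  rewrite (bigD1 a) //= -addrA (bigID (fun b : 'I_n => (a < b)%N)) /=.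
  congr (_ + (_ + _)); apply: eq_bigl => b;
    by case: (ltngtP a b) => [h|h|/val_inj ->]; rewrite ?eqxx ?andbF ?andbT //=;
       apply/eqP => e; move: h; rewrite e ltnn.
have lower_upper : \sum_(a : 'I_n) \sum_(b : 'I_n | (b < a)%N) f a b
                 = \sum_(a : 'I_n) \sum_(b : 'I_n | (a < b)%N) f a b.
  by rewrite (exchange_big_dep predT) //=; apply: eq_bigr => a _; apply: eq_bigr.
rewrite (eq_bigr _ (fun a _ => split_row a)) !big_split /= lower_upper; ring.
Qed.

End SumLemmas.

Section PBWCoordinates.
Variables (k : fieldType) (n : nat) (p : 'I_n -> 'I_n -> k).
Notation i0 := (@ord0 1).
Notation i1 := (@ord_max 1).

Lemma big_tuple1 (F : 1.-tuple 'I_n -> k) :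
  \sum_(t : 1.-tuple 'I_n) F t = \sum_a F [tuple a].
Proof.
rewrite (reindex (fun a : 'I_n => [tuple a])) //.
by exists (fun t : 1.-tuple 'I_n => tnth t ord0) => // t _; rewrite -tuple1E.
Qed.

Lemma big_tuple2 (F : 2.-tuple 'I_n -> k) :
  \sum_(t : 2.-tuple 'I_n) F t = \sum_a \sum_b F [tuple a; b].
Proof.
rewrite pair_big /= (reindex (fun q : 'I_n * 'I_n => [tuple q.1; q.2])) //.
exists (fun t : 2.-tuple 'I_n => (tnth t i0, tnth t i1)); first by case.
by move=> t _; rewrite -tuple2E.
Qed.

Lemma skew_coef1 (a : 'I_n) : skew_coef p [tuple a] = 1.
Proof.
rewrite /skew_coef; under eq_bigr do rewrite big_mkcond.
by rewrite !big_ord_recl !big_ord0 /= !mul1r.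
Qed.

Lemma skew_coef2 (a b : 'I_n) :
  skew_coef p [tuple a; b] = if (b < a)%N then p b a else 1.
Proof.
rewrite /skew_coef; under eq_bigr do rewrite big_mkcond.
by rewrite !big_ord_recl !big_ord0 /= !mul1r !mulr1.
Qed.

Lemma prod_coef1 (Y : 'I_1 -> 'I_n -> k) (a : 'I_n) :
  prod_coef p Y [tuple a] = Y ord0 a.
Proof.
rewrite /prod_coef (bigD1 [tuple a]) ?perm_refl //= big_ord1 big1 ?addr0.
  by rewrite skew_coef1 mulr1.
move=> v; rewrite (tuple1E v) => /andP[/perm_mem/(_ (tnth v ord0))].
by rewrite !inE eqxx => /esym/eqP ->; move/eqP.
Qed.

Lemma prod_coef2_diag (Y : 'I_2 -> 'I_n -> k) (a : 'I_n) :
  prod_coef p Y [tuple a; a] = Y i0 a * Y i1 a.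
Proof.
rewrite /prod_coef (bigD1 [tuple a; a]) ?perm_refl //= big_ord2.
rewrite big1 ?addr0; first by rewrite skew_coef2 ltnn mulr1.
move=> v; rewrite (tuple2E v) perm_eq2 orbb.
by case/andP=> /andP[/eqP -> /eqP ->] /eqP.
Qed.

Lemma prod_coef2_lt (Y : 'I_2 -> 'I_n -> k) (a b : 'I_n) : (a < b)%N ->
  prod_coef p Y [tuple a; b] = Y i0 a * Y i1 b + Y i0 b * Y i1 a * p a b.
Proof.
move=> hab; have ab_ba : [tuple a; b] != [tuple b; a].
  by apply/eqP=> /(congr1 val) [eab _]; move: hab; rewrite eab ltnn.
rewrite /prod_coef (bigD1 [tuple a; b]) ?perm_refl //= (bigD1 [tuple b; a]) /=;
  last by rewrite eq_sym ab_ba perm_eq2 !eqxx orbT.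
rewrite !big_ord2 big1 ?addr0; last first.
  move=> v; rewrite (tuple2E v) perm_eq2.
  by case/andP=> /andP[/orP[] /andP[/eqP -> /eqP ->]] => [/eqP|_ /eqP].
by rewrite !skew_coef2 ltnNge (ltnW hab) hab /= !mulr1.
Qed.

Lemma trace_deg1 (M : 'M[k]_n) : trace_deg p M 1 = \sum_a M a a.
Proof.
rewrite /trace_deg (eq_bigl predT) => [|s]; last by rewrite (tuple1E s).
by rewrite big_tuple1; apply: eq_bigr => a _; rewrite prod_coef1.
Qed.

Lemma trace_deg2 (M : 'M[k]_n) : trace_deg p M 2 =
  \sum_a M a a ^+ 2 + \sum_(a : 'I_n) \sum_(b : 'I_n | (a < b)%N)
                        (M a a * M b b + p a b * M a b * M b a).
Proof.
rewrite /trace_deg big_mkcond big_tuple2 -big_split /=; apply: eq_bigr => a _.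
rewrite (bigD1 a) //= /pbw /= /le_idx leqnn prod_coef2_diag /= expr2.
congr (_ + _); rewrite big_mkcond [RHS]big_mkcond; apply: eq_bigr => b _ /=.
case: (ltngtP a b) => [hab|hba|/val_inj <-]; last by rewrite eqxx.
- rewrite -(inj_eq val_inj) /= (gtn_eqF hab) prod_coef2_lt //=; ring.
- by rewrite if_same.
Qed.

End PBWCoordinates.

Section SwapMatrix.
Variables (k : fieldType) (n : nat).
Implicit Types (i j : 'I_n) (mu nu lam : k).

Definition swap_mx i j mu nu : 'M[k]_n :=
  \matrix_(a, b) if a == i then (if b == j then mu else 0)
                 else if a == j then (if b == i then nu else 0)
                 else (a == b)%:R.

Lemma std_mysticE i j lam : std_mystic i j lam = swap_mx i j lam (- lam^-1).
Proof.
apply/matrixP => a b; rewrite !mxE.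
by case: (a == i) => //; case: (a == j) => //; case: (a == b).
Qed.

Lemma swap_mx_sqr_row i j mu nu b : i != j ->
  (swap_mx i j mu nu ^+ 2) i b = mu * nu * (b == i)%:R.
Proof.
move=> ij; rewrite expr2 -mulmxE mxE (@sum_single _ _ j) => [|l lj]; last first.
  by rewrite !mxE eqxx (negbTE lj) mul0r.
rewrite !mxE eqxx eq_sym (negbTE ij) eqxx.
by case: (b == i); rewrite ?mulr1 ?mulr0.
Qed.

Lemma swap_mx_order4 i j mu nu : i != j ->
  swap_mx i j mu nu ^+ 4 = 1%:M -> (mu * nu) ^+ 2 = 1.
Proof.
move=> ij /matrixP/(_ i i); rewrite (_ : 4 = 2 + 2)%N // exprD -mulmxE !mxE eqxx.
rewrite (@sum_single _ _ i) => [|l li]; last first.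
  by rewrite swap_mx_sqr_row // (negbTE li) mulr0 mul0r.
by rewrite !swap_mx_sqr_row // eqxx mulr1 expr2.
Qed.

Lemma std_mystic_diag_conj i j lam : i != j -> lam != 0 ->
  let E := diag_mx (\row_c if c == i then lam else 1) in
  std_mystic i j lam *m E = E *m std_mystic i j 1.
Proof.
move=> ij lam0 E; rewrite /E mul_mx_diag mul_diag_mx; apply/matrixP => a b; rewrite !mxE.
have [_ | ai] := eqVneq a i.
  have [-> | _] := eqVneq b j; last by rewrite !mulr0 mul0r.
  by rewrite eq_sym (negbTE ij) !mulr1.
rewrite mul1r; have [_ | aj] := eqVneq a j.
  have [_ | _] := eqVneq b i; last by rewrite mul0r.
  by rewrite invr1 mulNr mulVf.
by have [<- | _] := eqVneq a b; rewrite ?(negbTE ai) ?mulr1 ?mul0r.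
Qed.

End SwapMatrix.

Section GradedAutomorphisms.
Variables (k : fieldType) (n : nat) (p : 'I_n -> 'I_n -> k).
Hypothesis hpd : forall i, p i i = 1.
Hypothesis hpinv : forall i j, p j i = (p i j)^-1.
Hypothesis hp0 : forall i j, p i j != 0.

(* The coefficient of x_a x_b (any a, b) in g(x_j) g(x_i) = p_ij g(x_i) g(x_j). *)
Lemma graded_aut_coef (M : 'M[k]_n) : graded_aut p M ->
  forall i j a b, M j a * M i b + p a b * M j b * M i a =
                  p i j * (M i a * M j b + p a b * M i b * M j a).
Proof.
case=> _ Hrel i j.
have lt_case (a b : 'I_n) : (a < b)%N ->
    M j a * M i b + p a b * M j b * M i a =
    p i j * (M i a * M j b + p a b * M i b * M j a).
  move=> hab; have := Hrel i j [tuple a; b].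
  rewrite /pbw /= andbT /le_idx (ltnW hab) => /(_ isT).
  rewrite !prod_coef2_lt //= => e.
  transitivity (M j a * M i b + M j b * M i a * p a b); first ring.
  by rewrite e; ring.
move=> a b; case: (ltngtP a b) => [hab|hba|/val_inj <-]; first exact: lt_case.
  have := lt_case _ _ hba; rewrite (hpinv a b) => e.
  have pab := hp0 a b; apply: (mulfI (invr_neq0 pab)).
  transitivity (M j b * M i a + (p a b)^-1 * M j a * M i b); first by field.
  by rewrite e; field.
have := Hrel i j [tuple a; a]; rewrite /pbw /= andbT /le_idx leqnn => /(_ isT).
rewrite !prod_coef2_diag /= hpd => e.
transitivity (2 * (M j a * M i a)); first ring.
by rewrite e; ring.
Qed.

Lemma diag_graded_aut (e : 'I_n -> k) : (forall c, e c != 0) ->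
  graded_aut p (diag_mx (\row_c e c)).
Proof.
move=> e0; split.
  by rewrite unitmxE det_diag unitfE; apply/prodf_neq0 => c _; rewrite mxE.
move=> i j s; rewrite (tuple2E s); move: (tnth s ord0) (tnth s ord_max) => a b.
rewrite /pbw /= andbT /le_idx leq_eqVlt => /orP[/eqP/val_inj eab | hab].
  subst b; rewrite !prod_coef2_diag /= !mxE.
  have [<- | ij] := eqVneq i j; first by rewrite hpd mul1r.
  have [<- | ia] := eqVneq i a; last by rewrite !mulr0n mul0r !mulr0.
  by rewrite (eq_sym j i) (negbTE ij) !mulr0n !mulr0 !mul0r.
have ab : a != b by apply: contraTneq hab => ->; rewrite ltnn.
rewrite !prod_coef2_lt //= !mxE.
have [<- | ij] := eqVneq i j; first by rewrite hpd mul1r.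
have ji : (j == i) = false by rewrite eq_sym (negbTE ij).
have [ja|ja] := eqVneq j a; have [ib|ib] := eqVneq i b;
have [ia|ia] := eqVneq i a; have [jb|jb] := eqVneq j b; subst => //=;
  rewrite ?eqxx ?ji ?(negbTE ij) /= ?mulr0n ?mulr1n ?mulr0 ?mul0r ?addr0 ?add0r //=;
  try ring.
all: try by rewrite eqxx in ij.
by rewrite (hpinv a b); field; exact: hp0.
Qed.

Lemma diag_elementary (e : 'I_n -> k) : (forall c, e c != 0) ->
  elementary p (diag_mx (\row_c e c)).
Proof.
move=> e0; split; first exact: diag_graded_aut.
move=> i j; rewrite inE !mxE; have [<- | //] := eqVneq i j.
by move=> /forallP[].
Qed.

Section Automorphism.
Variable M : 'M[k]_n.
Hypothesis hM : graded_aut p M.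
Let rel := graded_aut_coef hM.

Lemma graded_aut_pN1 a b : p a b != 1 -> M a b * M b a != 0 -> p a b = -1.
Proof.
move=> pab1 hab; have : (M a b * M b a) * (1 - p a b ^+ 2) = 0.
  transitivity (M b a * M a b + p a b * M b b * M a a
                - p a b * (M a a * M b b + p a b * M a b * M b a)); first ring.
  by rewrite rel subrr.
move/eqP; rewrite mulf_eq0 (negbTE hab) /= subr_eq0 eq_sym sqrf_eq1 (negbTE pab1).
by move/eqP.
Qed.

Hypothesis two_neq0 : (2 : k) != 0.

Lemma graded_aut_colN1 r s a : p r s = -1 -> M s a * M r a = 0.
Proof.
move=> prs; have := rel r s a a; rewrite hpd prs => e.
have : 4 * (M s a * M r a) = 0.
  transitivity ((M s a * M r a + 1 * M s a * M r a)
                - (-1 * (M r a * M s a + 1 * M r a * M s a))); first ring.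
  by rewrite e subrr.
move/eqP; rewrite mulf_eq0 => /orP[|/eqP //].
by rewrite (_ : 4 = 2 * 2) ?mulf_eq0 ?orbb ?(negbTE two_neq0) //; ring.
Qed.

Lemma graded_aut_diag0 r s c : p r s = -1 -> M r r = 0 -> M s r != 0 ->
  M r c != 0 -> M c c = 0.
Proof.
move=> prs hrr hsr hrc; have := rel r s c r; rewrite hrr prs => e.
have pcr : p c r = -1.
  apply: (mulIf (mulf_neq0 hsr hrc)).
  transitivity (M s c * 0 + p c r * M s r * M r c); first ring.
  by rewrite e; ring.
have prc : p r c = -1 by rewrite hpinv pcr invrN1.
have /eqP := graded_aut_colN1 c prc.
by rewrite mulf_eq0 (negbTE hrc) orbF => /eqP.
Qed.

Lemma graded_aut_side0 r q s : p r q = -1 -> M r r = 0 -> M r q != 0 ->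
  M q r != 0 -> M q s = 0 -> M s s = 1 -> M s r = 0.
Proof.
move=> prq hrr hrq hqr hqs hss; apply/eqP; apply: contraT => hsr.
have psq : p s q = 1.
  have := rel s q r r; rewrite hpd => e.
  apply: (mulIf (mulf_neq0 (mulf_neq0 two_neq0 hsr) hqr)).
  transitivity (p s q * (M s r * M q r + 1 * M s r * M q r)); first ring.
  by rewrite -e; ring.
have psr : p s r = 1.
  have := rel s q s r; rewrite hqs hss psq => e.
  apply: (mulIf hqr).
  transitivity (0 * M s r + p s r * M q r * 1); first ring.
  by rewrite e; ring.
have := rel s r r q; rewrite hrr psr prq => e.
have : 2 * (M s r * M r q) == 0.
  apply/eqP; transitivity (1 * (M s r * M r q + -1 * M s q * 0)
                           - (0 * M s q + -1 * M r q * M s r)); first ring.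
  by rewrite -e subrr.
by rewrite !mulf_eq0 (negbTE two_neq0) (negbTE hsr) (negbTE hrq).
Qed.

End Automorphism.

Lemma swap_mx_p_eq i j mu nu s : graded_aut p (swap_mx i j mu nu) ->
  mu != 0 -> s != i -> s != j -> p i s = p j s.
Proof.
move=> hM mu0 si sj; have := graded_aut_coef hM i s j s.
rewrite !mxE !eqxx (negbTE si) (negbTE sj) /= mulr0n => e.
apply: (mulIf mu0); transitivity (p i s * (mu * 1 + p j s * 0 * 0)); first ring.
by rewrite -e; ring.
Qed.

Lemma block_antipair i j : (2 : k) != 0 -> p i j = -1 ->
  (forall s, s != i -> s != j -> p i s = p j s) -> block p i = [set i].
Proof.
move=> two_neq0 pij pis.
have m1 : (-1 : k) != 1.
  by apply: contra two_neq0 => /eqP e; rewrite -[2]/(1 + 1) -{1}e addNr.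
apply/setP => t; rewrite !inE; have [-> | ti] := eqVneq t i; first exact/forallP.
apply/negbTE/negP => /forallP all_eq; have := all_eq j; rewrite pij.
have [-> | tj] := eqVneq t j; first by rewrite hpd (negbTE m1).
have /eqP := all_eq t; rewrite hpd pis // => pjt.
by rewrite hpinv pjt invr1 (negbTE m1).
Qed.

End GradedAutomorphisms.

Section TraceSeries.
Variable k : fieldType.

Lemma qr_series_coef1 (n : nat) (lam : k) : (2 <= n)%N ->
  qr_series_coef n lam 1 = lam + n%:R - 1.
Proof.
case: n => [|[|m]] // _; rewrite /qr_series_coef !big_ord_recr big_ord0 /=.
rewrite add0r !subSS !subn0 add0n add1n binSn binn expr0 expr1 mul1r.
by rewrite -[m.+2]addn1 -[m.+1]addn1 !natrD; ring.
Qed.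

Lemma qr_series_coef2N1 (n : nat) : (2 <= n)%N ->
  qr_series_coef n (-1 : k) 2 * 2 = n%:R ^+ 2 - 3 * n%:R + 4.
Proof.
case: n => [|[|m]] // _; rewrite /qr_series_coef !big_ord_recr big_ord0 /=.
rewrite add0r !subSS !subn0 add0n add1n binSn binn add2n.
have bin_m2 : 'C(m.+2, m)%:R * 2 = m.+2%:R * m.+1%:R :> k.
  by rewrite -!natrM; congr _%:R; elim: m => [|m IH] //; rewrite binS binSn; nia.
rewrite expr0 expr1 sqrrN expr1n !mul1r mulN1r !mulrDl bin_m2.
by rewrite -[m.+2]addn1 -[m.+1]addn1 !natrD; ring.
Qed.

End TraceSeries.

(* Writing D = P M P^-1 for the diagonal form, M - 1 = P^-1 (D - 1) P is the sum of
   the two rank-one terms coming from the eigenvalues sqrt(-1) and -sqrt(-1). *)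
Lemma rank2_perturbation (k : fieldType) (n : nat) (M P : 'M[k]_n) (im : k) :
  (2 <= n)%N -> P \in unitmx ->
  P *m M = diag_mx (\row_(j < n)
       (if (j.+2 == n)%N then im else if (j.+1 == n)%N then - im else 1)) *m P ->
  exists x y z w : 'I_n -> k,
   [/\ forall a b, M a b = (a == b)%:R + x a * y b + z a * w b,
       \sum_a y a * x a = im - 1, \sum_a w a * z a = - im - 1,
       \sum_a y a * z a = 0 & \sum_a w a * x a = 0].
Proof.
move=> hn hP hM.
have hl1 : (n - 2 < n)%N by lia.
have hl2 : (n - 1 < n)%N by lia.
set l1 := Ordinal hl1; set l2 := Ordinal hl2.
have l12 : l1 != l2 by rewrite -val_eqE /=; lia.
set Pi := invmx P.
set D := diag_mx _ in hM.
have eM : M = Pi *m (D *m P) by rewrite -hM mulKmx.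
have dl1 : (l1.+2 == n)%N by apply/eqP => /=; lia.
have dl2 : (l2.+2 == n)%N = false by apply/negbTE/eqP => /=; lia.
have dl2' : (l2.+1 == n)%N by apply/eqP => /=; lia.
have drest (l : 'I_n) : l != l1 -> l != l2 ->
    (l.+2 == n)%N = false /\ (l.+1 == n)%N = false.
  by rewrite -!val_eqE /= => h1 h2; split; apply/negbTE/eqP; lia.
have PPi l l' : \sum_a P l a * Pi a l' = (l == l')%:R.
  by have /matrixP/(_ l l') := mulmxV hP; rewrite !mxE.
exists (fun a => Pi a l1), (fun b => (im - 1) * P l1 b), (fun a => Pi a l2),
  (fun b => (- im - 1) * P l2 b); split.
- move=> a b.
  have e1 : (a == b)%:R = \sum_l Pi a l * P l b :> k.
    by have /matrixP/(_ a b) := mulVmx hP; rewrite !mxE.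
  rewrite {1}eM mul_diag_mx mxE e1.
  under eq_bigr do rewrite !mxE.
  apply/eqP; rewrite -addrA addrC -subr_eq; apply/eqP.
  rewrite -sumrB (bigD1 l1) // (bigD1 l2) /=; last by rewrite eq_sym.
  rewrite big1 ?addr0; last first.
    by move=> l /andP[h1 h2]; have [-> ->] := drest l h1 h2; rewrite mul1r subrr.
  rewrite dl1 dl2 dl2'; ring.
- have e : \sum_a P l1 a * Pi a l1 = 1 by rewrite PPi eqxx.
  by rewrite -[RHS]mulr1 -e mulr_sumr; apply: eq_bigr => a _; ring.
- have e : \sum_a P l2 a * Pi a l2 = 1 by rewrite PPi eqxx.
  by rewrite -[RHS]mulr1 -e mulr_sumr; apply: eq_bigr => a _; ring.
- transitivity ((im - 1) * \sum_a P l1 a * Pi a l2); last by rewrite PPi (negbTE l12) mulr0.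
  by rewrite mulr_sumr; apply: eq_bigr => a _; ring.
- transitivity ((- im - 1) * \sum_a P l2 a * Pi a l1).
    by rewrite mulr_sumr; apply: eq_bigr => a _; ring.
  by rewrite PPi eq_sym (negbTE l12) mulr0.
Qed.

Section MysticShape.
Variables (k : fieldType) (n : nat) (p : 'I_n -> 'I_n -> k).
Hypothesis hc : forall m : nat, (m%:R == 0 :> k) = (m == 0)%N.
Hypothesis hpd : forall i, p i i = 1.
Hypothesis hpinv : forall i j, p j i = (p i j)^-1.
Hypothesis hp0 : forall i j, p i j != 0.
Hypothesis hn : (2 <= n)%N.
Variable M : 'M[k]_n.
Hypothesis hM : graded_aut p M.
Variables (im : k) (x y z w : 'I_n -> k).
Hypothesis him : im ^+ 2 = -1.
Hypothesis hrep : forall a b, M a b = (a == b)%:R + x a * y b + z a * w b.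
Hypothesis hyx : \sum_a y a * x a = im - 1.
Hypothesis hwz : \sum_a w a * z a = - im - 1.
Hypothesis hyz : \sum_a y a * z a = 0.
Hypothesis hwx : \sum_a w a * x a = 0.
Variable lam : k.
Hypothesis hq : forall d, trace_deg p M d = qr_series_coef n lam d.

Let two_neq0 : (2 : k) != 0. Proof. by rewrite hc. Qed.

Definition rank2_part a b := x a * y b + z a * w b.
Local Notation R := rank2_part.

Lemma M_split a b : M a b = (a == b)%:R + R a b.
Proof. by rewrite hrep /R addrA. Qed.

Lemma rank2_partE a b : R a b = M a b - (a == b)%:R.
Proof. by rewrite M_split; ring. Qed.

Lemma trace_rank2_part : \sum_a R a a = -2.
Proof.
rewrite /rank2_part big_split /=.
under eq_bigr do rewrite mulrC; under [X in _ + X]eq_bigr do rewrite mulrC.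
by rewrite hyx hwz; ring.
Qed.

Lemma trace_rank2_part_sqr : \sum_a \sum_b R a b * R b a = 0.
Proof.
have -> : \sum_a \sum_b R a b * R b a =
   (\sum_a y a * x a) * (\sum_b y b * x b) + (\sum_a w a * x a) * (\sum_b y b * z b)
 + (\sum_a y a * z a) * (\sum_b w b * x b) + (\sum_a w a * z a) * (\sum_b w b * z b).
  rewrite !big_distrlr -!big_split; apply: eq_bigr => a _.
  by rewrite -!big_split; apply: eq_bigr => b _; rewrite /rank2_part /=; ring.
rewrite hyx hwz hyz hwx !mul0r !addr0.
transitivity (2 * im ^+ 2 + 2); first ring.
by rewrite him; ring.
Qed.

Lemma trace_M : \sum_a M a a = n%:R - 2.
Proof.
under eq_bigr do rewrite M_split eqxx.
by rewrite big_split /= sumr_const card_ord trace_rank2_part.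
Qed.

Lemma trace_M2 : \sum_a \sum_b M a b * M b a = n%:R - 4.
Proof.
have row a : \sum_b M a b * M b a = 1 + 2 * R a a + \sum_b R a b * R b a.
  rewrite (eq_bigr (fun b => (a == b)%:R * ((a == b)%:R + R a b + R b a)
                             + R a b * R b a)) => [|b _]; last first.
    by rewrite !M_split (eq_sym b a); ring.
  by rewrite big_split /= sum_delta eqxx /= mulr1n; ring.
under eq_bigr do rewrite row.
rewrite !big_split /= sumr_const card_ord -mulr_sumr trace_rank2_part trace_rank2_part_sqr; ring.
Qed.

Lemma lamE : lam = -1.
Proof.
have := hq 1; rewrite trace_deg1 trace_M qr_series_coef1 // => e.
transitivity (lam + n%:R - 1 - n%:R + 1); first ring.
by rewrite -e; ring.
Qed.

(* The trace of M on A_2 minus its trace on the second symmetric power of A_1. *)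
Definition skew_excess :=
  \sum_(a : 'I_n) \sum_(b : 'I_n | (a < b)%N) (p a b - 1) * M a b * M b a.

Lemma skew_excess_eq2 : skew_excess = 2.
Proof.
have h2 := hq 2; rewrite trace_deg2 lamE in h2.
set A := \sum_a M a a ^+ 2 in h2.
set B := \sum_(a : 'I_n) \sum_(b : 'I_n | (a < b)%N) M a a * M b b.
set C := \sum_(a : 'I_n) \sum_(b : 'I_n | (a < b)%N) M a b * M b a.
set D := \sum_(a : 'I_n) \sum_(b : 'I_n | (a < b)%N) p a b * M a b * M b a.
have eBD : \sum_(a : 'I_n) \sum_(b : 'I_n | (a < b)%N)
             (M a a * M b b + p a b * M a b * M b a) = B + D.
  by rewrite -big_split; apply: eq_bigr => a _; rewrite -big_split.
have eU : skew_excess = D - C.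
  rewrite /skew_excess /D /C -sumrB; apply: eq_bigr => a _; rewrite -sumrB.
  by apply: eq_bigr => b _; ring.
have eAB : (n%:R - 2) ^+ 2 = A + 2 * B.
  rewrite -trace_M expr2 big_distrlr /= (@sum_sym_split _ _ (fun a b => M a a * M b b));
    last by move=> *; ring.
  by congr (_ + _); apply: eq_bigr => a _; rewrite expr2.
have eAC : n%:R - 4 = A + 2 * C.
  rewrite -trace_M2 (@sum_sym_split _ _ (fun a b => M a b * M b a)); last by move=> *; ring.
  by congr (_ + _); apply: eq_bigr => a _; rewrite expr2.
have h2' : (A + (B + D)) * 2 = n%:R ^+ 2 - 3 * n%:R + 4.
  by rewrite -eBD h2 qr_series_coef2N1.
apply: (mulfI two_neq0); rewrite eU.
transitivity ((A + (B + D)) * 2 - (A + 2 * B) - (A + 2 * C)); first ring.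
by rewrite h2' -eAB -eAC; ring.
Qed.

Lemma exists_antipair : exists i j : 'I_n,
  [/\ i != j, p i j = -1, M i j * M j i != 0 & M i j * M j i != 1].
Proof.
suff [i [j [hij t0 h1]]] : exists i j : 'I_n,
    [/\ (i < j)%N, (p i j - 1) * M i j * M j i != 0 & M i j * M j i != 1].
  have pij1 : p i j != 1 by apply: contra t0 => /eqP ->; rewrite subrr !mul0r.
  have mm : M i j * M j i != 0 by move: t0; rewrite -mulrA mulf_eq0 negb_or => /andP[].
  exists i, j; split => //; last exact: (graded_aut_pN1 hpd hpinv hp0 hM).
  by rewrite -val_eqE /= neq_ltn hij.
pose antipair (a b : 'I_n) :=
  [&& (a < b)%N, (p a b - 1) * M a b * M b a != 0 & M a b * M b a != 1].
(* Otherwise every nonzero term of skew_excess is -2, and 2 = -2 N is absurd in characteristic 0. *)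
have [/existsP[i /existsP[j /and3P[]]] | none] := boolP [exists a, exists b, antipair a b].
  by exists i, j.
have term (a b : 'I_n) : (a < b)%N ->
    (p a b - 1) * M a b * M b a = - 2 * ((p a b - 1) * M a b * M b a != 0)%:R.
  move=> hab; have [-> | t0] := eqVneq ((p a b - 1) * M a b * M b a) 0.
    by rewrite mulr0.
  move: none; rewrite negb_exists => /forallP/(_ a); rewrite negb_exists.
  move=> /forallP/(_ b); rewrite /antipair hab t0 negbK /= => /eqP m1.
  have pab1 : p a b != 1 by apply: contra t0 => /eqP ->; rewrite subrr !mul0r.
  have mm : M a b * M b a != 0 by rewrite m1 oner_eq0.
  by rewrite (graded_aut_pN1 hpd hpinv hp0 hM pab1 mm) -mulrA m1 mulr1n; ring.
have := skew_excess_eq2; rewrite /skew_excess.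
under eq_bigr do under eq_bigr => b hb do rewrite term //.
under eq_bigr do rewrite -mulr_sumr -natr_sum.
rewrite -mulr_sumr -natr_sum; set N := (\sum_a _)%N => e.
suff : (2 + 2 * N)%N%:R == 0 :> k by rewrite hc.
rewrite natrD natrM; apply/eqP.
transitivity (2 + (- 2 * N%:R) * (-1) : k); first ring.
by rewrite e; ring.
Qed.

Lemma natr_inj (m1 m2 : nat) : m1%:R = m2%:R :> k -> m1 = m2.
Proof.
wlog le12 : m1 m2 / (m1 <= m2)%N => [hwlog|].
  by case: (leqP m1 m2) => [|/ltnW] h e; [|symmetry]; apply: hwlog.
move=> e; have : (m2 - m1)%N%:R == 0 :> k by rewrite natrB // e subrr.
by rewrite hc subn_eq0 => h; apply/eqP; rewrite eqn_leq le12.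
Qed.

(* R has rank two, so this 3 x 3 minor of R vanishes. *)
Lemma rank2_part_minor3 (r1 r2 r3 c1 c2 c3 : 'I_n) :
  R r3 c3 * (R r1 c1 * R r2 c2 - R r1 c2 * R r2 c1) =
  - R r1 c3 * (R r2 c1 * R r3 c2 - R r2 c2 * R r3 c1)
  + R r2 c3 * (R r1 c1 * R r3 c2 - R r1 c2 * R r3 c1).
Proof. rewrite /rank2_part; ring. Qed.

Section Antipair.
Variables i j : 'I_n.
Hypotheses (ij : i != j) (pij : p i j = -1).
Hypotheses (mn0 : M i j * M j i != 0) (mn1 : M i j * M j i != 1).

Let ji : j != i. Proof. by rewrite eq_sym. Qed.
Let mu0 : M i j != 0. Proof. by move: mn0; rewrite mulf_eq0 negb_or => /andP[]. Qed.
Let nu0 : M j i != 0. Proof. by move: mn0; rewrite mulf_eq0 negb_or => /andP[]. Qed.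
Let pji : p j i = -1. Proof. by rewrite hpinv pij invrN1. Qed.

Lemma antipair_diag0 : M i i = 0 /\ M j j = 0.
Proof.
have /eqP := graded_aut_colN1 hpd hpinv hp0 hM two_neq0 i pij.
have /eqP := graded_aut_colN1 hpd hpinv hp0 hM two_neq0 j pij.
by rewrite !mulf_eq0 (negbTE mu0) (negbTE nu0) orbF => /eqP -> /eqP ->.
Qed.

Lemma antipair_off_delta s t : s != i -> s != j -> t != i -> t != j ->
  M i t = 0 -> M j t = 0 -> M s t = (s == t)%:R.
Proof.
move=> si sj ti tj hit hjt; have [Mii Mjj] := antipair_diag0.
have Rit : R i t = 0 by rewrite rank2_partE hit eq_sym (negbTE ti) subr0.
have Rjt : R j t = 0 by rewrite rank2_partE hjt eq_sym (negbTE tj) subr0.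
have Rii : R i i = -1 by rewrite rank2_partE Mii eqxx sub0r.
have Rjj : R j j = -1 by rewrite rank2_partE Mjj eqxx sub0r.
have Rij : R i j = M i j by rewrite rank2_partE (negbTE ij) subr0.
have Rji : R j i = M j i by rewrite rank2_partE (negbTE ji) subr0.
have := rank2_part_minor3 i j s i j t; rewrite Rit Rjt Rii Rjj Rij Rji => e.
have : R s t * (1 - M i j * M j i) = 0.
  by transitivity (R s t * (-1 * -1 - M i j * M j i)); [ring | rewrite e; ring].
move/eqP; rewrite mulf_eq0 subr_eq0 [1 == _]eq_sym (negbTE mn1) orbF.
by rewrite rank2_partE subr_eq0 => /eqP.
Qed.

(* Every index touched by row i or row j contributes -1 to trace R = -2. *)
Lemma antipair_rows0 c : c != i -> c != j -> M i c = 0 /\ M j c = 0.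
Proof.
have [Mii Mjj] := antipair_diag0.
pose touched (a : 'I_n) : nat := [|| a == i, a == j, M i a != 0 | M j a != 0].
have R_diag a : R a a = - (touched a)%:R.
  rewrite /touched rank2_partE.
  have [-> | ai] /= := eqVneq a i; first by rewrite Mii eqxx sub0r.
  have [-> | aj] /= := eqVneq a j; first by rewrite Mjj eqxx sub0r.
  have [hia | hia] /= := eqVneq (M i a) 0; last first.
    by rewrite (graded_aut_diag0 hpd hpinv hp0 hM two_neq0 pij Mii nu0 hia) eqxx sub0r.
  have [hja | hja] /= := eqVneq (M j a) 0; last first.
    by rewrite (graded_aut_diag0 hpd hpinv hp0 hM two_neq0 pji Mjj mu0 hja) eqxx sub0r.
  by rewrite (antipair_off_delta ai aj ai aj hia hja) subrr oppr0.
have touched2 : (\sum_a touched a = 2)%N.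
  apply: natr_inj; rewrite natr_sum; apply: oppr_inj.
  by rewrite -trace_rank2_part -sumrN; apply: eq_bigr => a _; rewrite R_diag.
move=> ci cj; move: touched2; rewrite (bigD1 i) // (bigD1 j) /=; last by rewrite ji.
rewrite /touched !eqxx orbT /= => /eqP; rewrite -[2%N]/(1 + 1)%N eqn_add2l eqn_add2l.
rewrite sum_nat_eq0 => /forallP/(_ c); rewrite ci cj /= (negbTE ci) (negbTE cj) /=.
by rewrite eqb0 negb_or !negbK => /andP[/eqP -> /eqP ->].
Qed.

Lemma antipair_shape : M = swap_mx i j (M i j) (M j i).
Proof.
have [Mii Mjj] := antipair_diag0.
have Mss s : s != i -> s != j -> M s s = 1.
  move=> si sj; have [his hjs] := antipair_rows0 si sj.
  by rewrite (antipair_off_delta si sj si sj his hjs) eqxx.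
apply/matrixP => a b; rewrite mxE.
have [-> | ai] := eqVneq a i.
  have [-> | bj] := eqVneq b j => //; have [-> | bi] := eqVneq b i => //.
  by case: (antipair_rows0 bi bj).
have [-> | aj] := eqVneq a j.
  have [-> | bi] := eqVneq b i => //; have [-> | bj] := eqVneq b j => //.
  by case: (antipair_rows0 bi bj).
have [-> | bi] := eqVneq b i.
  have [_ hja] := antipair_rows0 ai aj.
  by rewrite (graded_aut_side0 hpd hpinv hp0 hM two_neq0 pij Mii mu0 nu0 hja (Mss a ai aj))
    (negbTE ai).
have [-> | bj] := eqVneq b j.
  have [hia _] := antipair_rows0 ai aj.
  by rewrite (graded_aut_side0 hpd hpinv hp0 hM two_neq0 pji Mjj nu0 mu0 hia (Mss a ai aj))
    (negbTE aj).
have [hib hjb] := antipair_rows0 bi bj.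
exact: antipair_off_delta.
Qed.

End Antipair.

Lemma mystic_shape : exists i j : 'I_n,
  [/\ i != j, p i j = -1, M i j * M j i != 1, M i j != 0
    & M = swap_mx i j (M i j) (M j i)].
Proof.
have [i [j [ij pij mn0 mn1]]] := exists_antipair.
exists i, j; split => //; last exact: antipair_shape.
by move: mn0; rewrite mulf_eq0 negb_or => /andP[].
Qed.

End MysticShape.

Unset Implicit Arguments.
Set Strict Implicit.

Theorem proposition3p1 (k : closedFieldType) (n : nat)
    (p : 'I_n -> 'I_n -> k)
    (hchar : [pchar k] =i pred0)
    (hn : (2 <= n)%N)
    (hp0 : forall i j, p i j != 0)
    (hpd : forall i, p i i = 1)
    (hpinv : forall i j, p j i = (p i j)^-1)
    (tau : 'M[k]_n)
    (htau : mystic_reflection p tau) :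
  (exists (i j : 'I_n) (lam : k),
     [/\ i != j, lam != 0, p i j = -1,
         (forall s, s != i -> s != j -> p i s = p j s)
       & [/\ block p i = [set i], block p j = [set j]
            & tau = std_mystic i j lam]]) /\
  (exists (i j : 'I_n) (E : 'M[k]_n),
     [/\ i != j, p i j = -1,
         (forall s, s != i -> s != j -> p i s = p j s),
         elementary p E
       & invmx E *m tau *m E = std_mystic i j 1]).
Proof.
have hc := (pcharf0P k).1 hchar; have two_neq0 : (2 : k) != 0 by rewrite hc.
case: htau => [[hgr [lam [_ hq]]] [h4 [_ [im [P [him [hP hPM]]]]]]].
have [x [y [z [w [hrep hyx hwz hyz hwx]]]]] := rank2_perturbation hn hP hPM.
have [i [j [ij pij mn1 mu0 tauE]]] :=
  mystic_shape hc hpd hpinv hp0 hn hgr him hrep hyx hwz hyz hwx hq.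
set mu := tau i j in mn1 mu0 tauE; set nu := tau j i in mn1 tauE.
have mnN1 : mu * nu = -1.
  move: h4; rewrite tauE => /(swap_mx_order4 ij)/eqP.
  by rewrite sqrf_eq1 (negbTE mn1) => /eqP.
have {}tauE : tau = std_mystic i j mu.
  rewrite std_mysticE tauE (_ : nu = - mu^-1) //.
  by apply: (mulfI mu0); rewrite mnN1 mulrN divff.
have pis s : s != i -> s != j -> p i s = p j s.
  have hgr' : graded_aut p (swap_mx i j mu (- mu^-1)) by rewrite -std_mysticE -tauE.
  exact: swap_mx_p_eq hgr' mu0.
have pji : p j i = -1 by rewrite hpinv pij invrN1.
have e0 c : (if c == i then mu else 1) != 0 by case: ifP; rewrite ?oner_eq0.
split.
  exists i, j, mu; split => //; split => //.
    by apply: (block_antipair hpd hpinv two_neq0 pij).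
  by apply: (block_antipair hpd hpinv two_neq0 pji) => s sj si; rewrite pis.
exists i, j, (diag_mx (\row_c if c == i then mu else 1)); split => //.
  exact: diag_elementary.
rewrite tauE -mulmxA std_mystic_diag_conj // mulKmx //.
exact: (diag_graded_aut hpd hpinv hp0 e0).1.
Qed.
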